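(* Let $\rho>1$, $k\ge1$ an integer and $\kappa\in(\kappa^c_\rho(k),1)$. Then there exists $(a_i)_{2\le i\le k+1}\in[0,1)^k$ such that, with $d_{k+1}=\mathcal D(a_2,\dots,a_{k+1})$, $$1<\kappa^{k+1}\frac{(1+\rho)^2}{4\rho}\sqrt{\prod_{2\le j\le k+1}(1-a_j^2)}<\kappa\frac{d_{k+1}}{2\rho}.$$
   Context: Set $r_1=r_{k+1}=1+\rho$, $r_i=2$ for $2\le i\le k$; for $(a_i)_{2\le i\le k+1}\in[0,1)^k$ let $d_1=1+\rho$ and $d_i^2=d_{i-1}^2+2r_ia_id_{i-1}+r_i^2$ ($2\le i\le k+1$, $d_i>0$), $\mathcal D(a_2,\dots,a_{k+1})=d_{k+1}$; $$\kappa^c_\rho(k)=\inf_{0\le a_2,\dots,a_{k+1}<1}\max\left(\left(\frac{4\rho}{(1+\rho)^2\sqrt{\prod_{2\le i\le k+1}(1-a_i^2)}}\right)^{\frac1{k+1}},\ \frac{2\rho}{\mathcal D(a_2,\dots,a_{k+1})}\right).$$ *)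

From HB Require Import structures.
From mathcomp Require Import all_boot all_order all_algebra.
From mathcomp Require Import all_classical all_reals all_analysis.
Set Implicit Arguments. Unset Strict Implicit. Unset Printing Implicit Defensive.
Import Order.TTheory GRing.Theory Num.Theory.
Local Open Scope ring_scope.
Local Open Scope classical_set_scope.

Section Kappa.
Variable R : realType.

Definition rr (rho : R) (k i : nat) : R :=
  if (i == 1%N) || (i == k.+1) then 1 + rho else 2.

(* d_1 = 1 + rho, d_i = sqrt(d_{i-1}^2 + 2 r_i a_i d_{i-1} + r_i^2) for i >= 2.
   (Index 0 is a dummy value.) The sequence a : nat -> R is used only at
   indices 2 .. k+1. *)
Fixpoint dd (rho : R) (k : nat) (a : nat -> R) (i : nat) : R :=
  match i with
  | 0%N => 1 + rho
  | 1%N => 1 + rho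
  | m.+1 => Num.sqrt (dd rho k a m ^+ 2 + 2 * rr rho k m.+1 * a m.+1 * dd rho k a m
                      + rr rho k m.+1 ^+ 2)
  end.

Definition DD (rho : R) (k : nat) (a : nat -> R) : R := dd rho k a k.+1.

Definition prodA (k : nat) (a : nat -> R) : R :=
  \prod_(2 <= i < k.+2) (1 - a i ^+ 2).

Definition admissible (k : nat) (a : nat -> R) : Prop :=
  forall i : nat, (2 <= i <= k.+1)%N -> 0 <= a i < 1.

Definition kappa_obj (rho : R) (k : nat) (a : nat -> R) : R :=
  Num.max (powR (4 * rho / ((1 + rho) ^+ 2 * Num.sqrt (prodA k a))) (k.+1%:R)^-1)
          (2 * rho / DD rho k a).

Definition kappa_c (rho : R) (k : nat) : R :=
  inf [set x | exists a : nat -> R, admissible k a /\ x = kappa_obj rho k a].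

End Kappa.

From HB Require Import structures.
From mathcomp Require Import all_boot all_order all_algebra.
From mathcomp Require Import all_classical all_reals all_analysis.
From mathcomp Require Import ring lra.
Set Implicit Arguments. Unset Strict Implicit. Unset Printing Implicit Defensive.
Import Order.TTheory GRing.Theory Num.Theory.
Local Open Scope ring_scope.

(* Start from an admissible a whose objective is below kappa: then both
   kappa^(k+1) (1+rho)^2/(4 rho) sqrt(prod (1 - a_j^2)) and
   kappa d_(k+1)/(2 rho) exceed 1.  Raising a_2 alone brings the square root of
   the product down to any prescribed positive value, and cannot lower d_(k+1),
   which is nondecreasing in every a_i; so the left-hand side can be moved to
   any value strictly between 1 and the smaller of the two quantities. *)

Lemma ler_sqrt_step (R : realType) (r a a' d d' : R) :
  0 <= r -> 0 <= a <= a' -> 0 <= d <= d' ->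
  Num.sqrt (d ^+ 2 + 2 * r * a * d + r ^+ 2)
    <= Num.sqrt (d' ^+ 2 + 2 * r * a' * d' + r ^+ 2).
Proof.
move=> r0 /andP[a0 aa'] /andP[d0 dd'].
have rad0 : 0 <= 2 * r * a * d by rewrite !mulr_ge0.
have rad' : 2 * r * a * d <= 2 * r * a' * d'.
  by rewrite -!mulrA !ler_wpM2l // ler_pM.
by rewrite ler_sqrt; nra.
Qed.

Lemma powR_invn_lt_expn (R : realType) (x y : R) (n : nat) :
  0 <= x -> x `^ (n.+1%:R)^-1 < y -> x < y ^+ n.+1.
Proof.
move=> x0 lty; have {1}-> : x = (x `^ (n.+1%:R)^-1) ^+ n.+1.
  by rewrite -powR_mulrn ?powR_ge0 // -powRrM mulVf ?powRr1.
by rewrite ltrXn2r // powR_ge0.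
Qed.

Section Kappa.
Variables (R : realType) (k : nat).

Lemma admissible_subr_sqr_gt0 (a : nat -> R) i :
  admissible k a -> (2 <= i <= k.+1)%N -> 0 < 1 - a i ^+ 2.
Proof. by move=> adm /adm /andP[a0 a1]; rewrite subr_gt0 expr2; nra. Qed.

Lemma prodA_gt0 (a : nat -> R) : admissible k a -> 0 < prodA k a.
Proof.
move=> adm; rewrite /prodA big_nat_cond; apply: prodr_gt0 => i /andP[ik _].
exact: admissible_subr_sqr_gt0.
Qed.

Lemma prodA_split (a : nat -> R) : (0 < k)%N ->
  prodA k a = (1 - a 2 ^+ 2) * \prod_(3 <= i < k.+2) (1 - a i ^+ 2).
Proof. by move=> k0; rewrite /prodA big_ltn. Qed.

Lemma sqrt_prodA_reach (a : nat -> R) t : (0 < k)%N -> admissible k a ->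
  0 < t <= Num.sqrt (prodA k a) ->
  exists a', [/\ admissible k a', forall j, a j <= a' j
               & Num.sqrt (prodA k a') = t].
Proof.
move=> k0 adm /andP[t0 leP].
have two_in : (2 <= 2 <= k.+1)%N by rewrite ltnS.
have /andP[a20 a21] := adm 2%N two_in.
set Q := \prod_(3 <= i < k.+2) (1 - a i ^+ 2).
have sqrtQ0 : 0 < Num.sqrt Q.
  rewrite sqrtr_gt0 /Q big_nat_cond prodr_gt0 // => i /andP[/andP[i3 ik] _].
  by apply: admissible_subr_sqr_gt0; rewrite // ltnW.
set w := t / Num.sqrt Q.
have w0 : 0 < w by rewrite divr_gt0.
have w_le : w ^+ 2 <= 1 - a 2 ^+ 2.
  have a2 := ltW (admissible_subr_sqr_gt0 adm two_in).
  have w_le : w <= Num.sqrt (1 - a 2 ^+ 2).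
    by rewrite ler_pdivrMr // -sqrtrM // -prodA_split.
  by rewrite -(sqr_sqrtr a2) lerXn2r // nnegrE ?sqrtr_ge0 // ltW.
set s := Num.sqrt (1 - w ^+ 2).
have s2 : s ^+ 2 = 1 - w ^+ 2 by rewrite sqr_sqrtr // subr_ge0; nra.
have s_lt1 : s < 1.
  by rewrite -sqrtr1 ltr_sqrt ?ltrBlDr ?ltrDl ?exprn_gt0 //; nra.
have a2s : a 2 <= s by rewrite -(ger0_norm a20) -sqrtr_sqr ler_sqrt; nra.
exists (fun i => if i == 2%N then s else a i); split.
- by move=> i /adm ai; case: eqP => _; rewrite ?sqrtr_ge0.
- by move=> j; case: eqP => [->|_].
rewrite prodA_split // eqxx s2 (_ : 1 - (1 - w ^+ 2) = w ^+ 2); last lra.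
rewrite (eq_big_nat _ _ (F2 := fun i => 1 - a i ^+ 2)); last first.
  by move=> i /andP[i3 _]; case: eqP i3 => // ->.
rewrite -/Q sqrtrM ?exprn_ge0 ?ltW // sqrtr_sqr ger0_norm ?ltW //.
by rewrite /w divfK ?gt_eqF.
Qed.

Variables (rho : R).
Hypothesis rho_gt0 : 0 < rho.

Lemma rr_gt0 i : 0 < rr rho k i.
Proof. by rewrite /rr; case: ifP => _; have := rho_gt0; lra. Qed.

Lemma ddSS (a : nat -> R) m :
  dd rho k a m.+2 = Num.sqrt (dd rho k a m.+1 ^+ 2
    + 2 * rr rho k m.+2 * a m.+2 * dd rho k a m.+1 + rr rho k m.+2 ^+ 2).
Proof. by []. Qed.

Lemma dd_gt0 (a : nat -> R) i :
  (forall j, (2 <= j <= i)%N -> 0 <= a j) -> 0 < dd rho k a i.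
Proof.
elim: i => [|[|m] IH] a0; try by rewrite /=; have := rho_gt0; lra.
rewrite ddSS sqrtr_gt0.
have d0 : 0 < dd rho k a m.+1.
  by apply: IH => j /andP[j2 jm]; rewrite a0 // j2 ltnW.
have r0 := rr_gt0 m.+2.
have am : 0 <= a m.+2 by rewrite a0 // leqnn.
have : 0 <= 2 * rr rho k m.+2 * a m.+2 * dd rho k a m.+1.
  by rewrite !mulr_ge0 ?(ltW r0) ?(ltW d0).
nra.
Qed.

Lemma dd_le (a a' : nat -> R) i :
  (forall j, (2 <= j <= i)%N -> 0 <= a j <= a' j) -> dd rho k a i <= dd rho k a' i.
Proof.
elim: i => [|[|m] IH] aa' //.
have aa'_m j : (2 <= j <= m.+1)%N -> 0 <= a j <= a' j.
  by move=> /andP[j2 jm]; rewrite aa' // j2 ltnW.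
have d0 : 0 <= dd rho k a m.+1 by apply/ltW/dd_gt0 => j /aa'_m /andP[].
rewrite !ddSS; apply: ler_sqrt_step; first exact/ltW/rr_gt0.
  by rewrite aa' // leqnn.
by rewrite d0 IH.
Qed.

Lemma kappa_obj_gt0 (a : nat -> R) : admissible k a -> 0 < kappa_obj rho k a.
Proof.
move=> adm; rewrite lt_max; apply/orP; right.
by rewrite divr_gt0 ?mulr_gt0 // /DD dd_gt0 // => j /adm /andP[].
Qed.

Lemma kappa_obj_lt (a : nat -> R) kappa :
  admissible k a -> kappa_obj rho k a < kappa ->
  1 < kappa ^+ k.+1 * ((1 + rho) ^+ 2 / (4 * rho)) * Num.sqrt (prodA k a) /\
  1 < kappa * (DD rho k a / (2 * rho)).
Proof.
move=> adm; rewrite /kappa_obj gt_max => /andP[ltX ltD].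
have sqrtP0 : 0 < Num.sqrt (prodA k a) by rewrite sqrtr_gt0 prodA_gt0.
have rho1_0 : 0 < 1 + rho by have := rho_gt0; lra.
set X := 4 * rho / _ in ltX.
have X0 : 0 < X by rewrite divr_gt0 ?mulr_gt0 ?exprn_gt0.
have XC : X * ((1 + rho) ^+ 2 / (4 * rho)) * Num.sqrt (prodA k a) = 1.
  by rewrite /X; field; rewrite !lt0r_neq0 //; lra.
have D0 : 0 < DD rho k a by rewrite /DD dd_gt0 // => j /adm /andP[].
split.
- rewrite -{1}XC !ltr_pM2r ?divr_gt0 ?exprn_gt0 ?mulr_gt0 //.
  exact: powR_invn_lt_expn (ltW X0) ltX.
- by rewrite mulrA ltr_pdivlMr ?mulr_gt0 // mul1r -ltr_pdivrMr.
Qed.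

End Kappa.

Lemma kappa_c_ltP (R : realType) (rho : R) k kappa : kappa_c rho k < kappa ->
  exists2 a, admissible k a & kappa_obj rho k a < kappa.
Proof.
move=> /inf_lt[|_ [a [adm ->]]]; last by exists a.
exists (kappa_obj rho k (fun=> 0)), (fun=> 0); split => // i _.
by rewrite lexx ltr01.
Qed.

Theorem lemma2p10 (R : realType) (rho : R) (k : nat) (kappa : R) :
  1 < rho -> (1 <= k)%N -> kappa_c rho k < kappa -> kappa < 1 ->
  exists a : nat -> R, admissible k a /\
    1 < kappa ^+ k.+1 * ((1 + rho) ^+ 2 / (4 * rho)) * Num.sqrt (prodA k a) /\
    kappa ^+ k.+1 * ((1 + rho) ^+ 2 / (4 * rho)) * Num.sqrt (prodA k a)
      < kappa * (DD rho k a / (2 * rho)).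
Proof.
move=> rho1 k1 /kappa_c_ltP[a adm lt_obj] _.
have rho0 : 0 < rho by lra.
have [T1 B1] := kappa_obj_lt rho0 adm lt_obj.
set c := kappa ^+ k.+1 * ((1 + rho) ^+ 2 / (4 * rho)) in T1 *.
set B := kappa * (DD rho k a / (2 * rho)) in B1 *.
have kappa0 : 0 < kappa := lt_trans (kappa_obj_gt0 rho0 adm) lt_obj.
have c0 : 0 < c by rewrite mulr_gt0 ?exprn_gt0 ?divr_gt0 ?exprn_gt0 //; lra.
set v := (1 + Num.min (c * Num.sqrt (prodA k a)) B) / 2.
have [v1 vT vB] : [/\ 1 < v, v < c * Num.sqrt (prodA k a) & v < B].
  by rewrite /v; case: (leP (c * Num.sqrt (prodA k a)) B) => h; split; lra.
have [|a' [adm' le_aa' sqrtP']] := @sqrt_prodA_reach R k a (v / c) k1 adm.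
  by rewrite divr_gt0 ?(ler_pdivrMr _ _ c0) 1?mulrC ?(ltW vT) //; lra.
exists a'; rewrite sqrtP' mulrCA divff ?mulr1 ?gt_eqF //; split=> //; split=> //.
have inv2rho0 : 0 < (2 * rho)^-1 by rewrite invr_gt0; lra.
apply: (lt_le_trans vB); rewrite /B ler_pM2l // ler_pM2r //.
by apply: dd_le => // j /adm /andP[a0 _]; rewrite a0 le_aa'.
Qed.
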